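(* Let $n\ge2$, $\mathbb{Z}_n=\mathbb{Z}/n\mathbb{Z}$, $\mathcal{P}=\{(x_1,\dots,x_{n-1})\in\mathbb{Z}_n^{n-1}\mid x_1,\dots,x_{n-1}\text{ pairwise different}\}$ and $\mathcal{S}=\{r\in\mathbb{Z}_n^{n-1}\mid \exists\,x,y\in\mathcal{P}: r=x+y\}$. Let $\mathbf{1}=(1,\dots,1)\in\mathbb{Z}_n^{n-1}$. Then: (i) $\gamma\mathbf{1}\in\mathcal{S}$ for all $\gamma\in\mathbb{Z}_n$; (ii) if $r\in\mathcal{S}$, then every vector obtained from $r$ by permuting its $n-1$ coordinates lies in $\mathcal{S}$; (iii) if $r\in\mathcal{S}$, then $\gamma r\in\mathcal{S}$ for every unit $\gamma$ of the ring $\mathbb{Z}_n$; (iv) if $r\in\mathcal{S}$, then $r+\gamma\mathbf{1}\in\mathcal{S}$ for all $\gamma\in\mathbb{Z}_n$; (v) $\mathcal{P}\subseteq\mathcal{S}$. *)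

From mathcomp Require Import all_boot all_order all_algebra all_fingroup.
Set Implicit Arguments. Unset Strict Implicit. Unset Printing Implicit Defensive.
Import GRing.Theory.
Local Open Scope ring_scope.

Definition Pset (n : nat) (x : 'rV['Z_n]_(n.-1)) : Prop :=
  forall i j : 'I_(n.-1), i != j -> x 0 i != x 0 j.

Definition Sset (n : nat) (r : 'rV['Z_n]_(n.-1)) : Prop :=
  exists x y : 'rV['Z_n]_(n.-1), Pset x /\ Pset y /\ r = x + y.

Definition ones (n : nat) : 'rV['Z_n]_(n.-1) := const_mx 1.

From mathcomp Require Import all_boot all_order all_algebra all_fingroup.
From mathcomp Require Import zify.
Set Implicit Arguments.
Unset Strict Implicit.
Unset Printing Implicit Defensive.

Import GRing.Theory.
Local Open Scope ring_scope.

(** Permuting coordinates, scaling by a unit and adding a constant vector all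
    preserve [Pset] and commute with addition, which gives (ii)-(iv). Let
    [iota_row] = (0, 1, ..., n-2). Then 0 = iota_row + (-iota_row), and (i)
    follows from (iv). For (v), a vector [x] in [Pset] misses exactly one
    residue [m], so [x - (m + 1)] takes each of the values 0, ..., n-2 once:
    [x] is a permutation of [iota_row] shifted by [m + 1], and it remains to
    put [iota_row] in [Sset]. For odd [n] it is twice its half; for even
    [n = 2k], write [i = (i + c i) - c i] with [c i = i] for [i < k] and
    [c i = i + 1] otherwise. *)

Lemma eq_natZp_lt_double (n a b : nat) : (1 < n)%N -> a%:R = b%:R :> 'Z_n ->
  (a < 2 * n)%N -> (b < 2 * n)%N -> a = b \/ a = (b + n)%N \/ b = (a + n)%N.
Proof.
move=> n_gt1 /(congr1 val); rewrite !Zp_nat /= Zp_cast // => ab_mod a_lt b_lt.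
have qa : (a %/ n < 2)%N by rewrite ltn_divLR //; lia.
have qb : (b %/ n < 2)%N by rewrite ltn_divLR //; lia.
rewrite (divn_eq a n) (divn_eq b n) ab_mod.
by move: qa qb; case: (a %/ n)%N => [|[|]] //; case: (b %/ n)%N => [|[|]] //; lia.
Qed.

Lemma natZp_pred (n : nat) : (1 < n)%N -> (n.-1)%:R = -1 :> 'Z_n.
Proof.
move=> n_gt1; apply: (addIr 1); rewrite addNr natr1 prednK ?pchar_Zp //; lia.
Qed.

Lemma val_Zp_lt_pred (n : nat) (u : 'Z_n) : (1 < n)%N -> u != -1 -> (val u < n.-1)%N.
Proof.
move=> n_gt1 u_neq; have : (val u < n)%N by rewrite -[X in (_ < X)%N](Zp_cast n_gt1) ltn_ord.
suff : val u != n.-1 by lia.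
by apply: contra u_neq => /eqP u_eq; rewrite -[u]natr_Zp u_eq natZp_pred.
Qed.

Lemma exists_notin_codom_Zp (n : nat) (f : 'I_n.-1 -> 'Z_n) :
  (1 < n)%N -> exists m : 'Z_n, forall i, f i != m.
Proof.
move=> n_gt1; have [m m_notin | all_in] := pickP [pred m | m \notin codom f].
  by exists m => i; apply: contraNneq m_notin => <-; apply: codom_f.
suff : (#|'Z_n| <= #|'I_n.-1|)%N by rewrite !card_ord => le; exfalso; have := Zp_cast n_gt1; lia.
rewrite -(size_codom f); apply: leq_trans (card_size _).
by apply/subset_leq_card/subsetP => m _; have /negbFE := all_in m.
Qed.

Section SumsOfDistinctVectors.
Variable n : nat.
Implicit Types x r : 'rV['Z_n]_(n.-1).

Lemma Pset_col_perm x (s : 'S_(n.-1)) : Pset x -> Pset (col_perm s x).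
Proof.
by move=> Px i j ij; rewrite !mxE; apply: Px; apply: contra ij => /eqP/perm_inj ->.
Qed.

Lemma Pset_scale x (g : 'Z_n) : g \is a GRing.unit -> Pset x -> Pset (g *: x).
Proof.
move=> g_unit Px i j ij; rewrite !mxE.
by apply: contra (Px i j ij) => /eqP/(mulrI g_unit) ->.
Qed.

Lemma Pset_shift x (g : 'Z_n) : Pset x -> Pset (x + g *: ones n).
Proof. by move=> Px i j ij; rewrite !mxE; apply: contra (Px i j ij) => /eqP/addIr ->. Qed.

Lemma Sset_col_perm r (s : 'S_(n.-1)) : Sset r -> Sset (col_perm s r).
Proof.
case=> x [y [Px [Py ->]]]; exists (col_perm s x), (col_perm s y).
by split; [|split]; [exact: Pset_col_perm.. | apply/matrixP => i j; rewrite !mxE].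
Qed.

Lemma Sset_scale r (g : 'Z_n) : g \is a GRing.unit -> Sset r -> Sset (g *: r).
Proof.
move=> g_unit [x [y [Px [Py ->]]]]; exists (g *: x), (g *: y).
by split; [|split]; [exact: Pset_scale.. | rewrite scalerDr].
Qed.

Lemma Sset_shift r (g : 'Z_n) : Sset r -> Sset (r + g *: ones n).
Proof.
case=> x [y [Px [Py ->]]]; exists (x + g *: ones n), y.
by split; [exact: Pset_shift | split; [|rewrite addrAC]].
Qed.

Hypothesis n_gt1 : (1 < n)%N.

Definition iota_row : 'rV['Z_n]_(n.-1) := \row_i (i : nat)%:R.

Lemma Pset_iota_row : Pset iota_row.
Proof.
move=> i j; apply: contraNneq; rewrite !mxE => /(eq_natZp_lt_double n_gt1) ij.
by apply/eqP/ord_inj; move: ij (ltn_ord i) (ltn_ord j); lia.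
Qed.

Lemma Sset0 : Sset (0 : 'rV['Z_n]_(n.-1)).
Proof.
exists iota_row, (-1 *: iota_row); split; first exact: Pset_iota_row.
by split; [apply: Pset_scale Pset_iota_row; rewrite unitrN1 | rewrite scaleN1r subrr].
Qed.

Lemma Sset_iota_row_odd : odd n -> Sset iota_row.
Proof.
move=> n_odd; pose half : 'Z_n := (n./2).+1%:R.
have half_twice : half + half = 1.
  rewrite -natrD; have -> : ((n./2).+1 + (n./2).+1 = n.+1)%N.
    by have := odd_double_half n; rewrite n_odd; lia.
  by rewrite -natr1 pchar_Zp // add0r.
have half_unit : half \is a GRing.unit.
  by apply/unitrPr; exists (1 + 1); rewrite mulrDr mulr1.
exists (half *: iota_row), (half *: iota_row).
by split; [|split]; [exact: Pset_scale Pset_iota_row.. | rewrite -scalerDl half_twice scale1r].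
Qed.

Lemma Sset_iota_row_even : ~~ odd n -> Sset iota_row.
Proof.
move=> n_even; have n_eq : n = (2 * n./2)%N.
  by rewrite -[in LHS](odd_double_half n) (negbTE n_even) add0n -mul2n.
pose c (i : 'I_n.-1) := if (n./2 <= i)%N then i.+1 else i.
have c_lt i : (c i < n)%N by have := ltn_ord i; rewrite /c; case: (leqP n./2 i); lia.
exists (\row_i (i + c i)%N%:R), (\row_i - (c i)%:R); split; [|split].
- move=> i j; apply: contraNneq; rewrite !mxE => /(eq_natZp_lt_double n_gt1) ij.
  apply/eqP/ord_inj; move: ij (ltn_ord i) (ltn_ord j); rewrite /c.
  by case: (leqP n./2 i); case: (leqP n./2 j); lia.
- move=> i j; apply: contraNneq; rewrite !mxE => /oppr_inj/(eq_natZp_lt_double n_gt1) ij.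
  apply/eqP/ord_inj; move: ij (ltn_ord i) (ltn_ord j); rewrite /c.
  by case: (leqP n./2 i); case: (leqP n./2 j); lia.
- by apply/matrixP => i j; rewrite !mxE natrD addrK.
Qed.

Lemma Sset_iota_row : Sset iota_row.
Proof. by case: (boolP (odd n)); [exact: Sset_iota_row_odd | exact: Sset_iota_row_even]. Qed.

Lemma Pset_iota_row_orbit x : Pset x ->
  exists (s : 'S_(n.-1)) (g : 'Z_n), x = col_perm s iota_row + g *: ones n.
Proof.
move=> Px; have [m x_neq_m] := exists_notin_codom_Zp (x 0) n_gt1.
pose u i := x 0 i - (m + 1).
have u_lt i : (val (u i) < n.-1)%N.
  by apply: val_Zp_lt_pred; rewrite // subr_eq addrCA addNr addr0.
pose sigma i := Ordinal (u_lt i).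
have sigma_inj : injective sigma.
  move=> i j /(congr1 val) sigma_ij.
  have /val_inj/subIr xij : val (u i) = val (u j) by [].
  by case: (eqVneq i j) => // /(Px i j); rewrite xij eqxx.
have sigma_val j : (sigma j : nat)%:R = u j := natr_Zp (u j).
exists (perm sigma_inj), (m + 1); apply/matrixP => i j.
by rewrite !mxE permE (ord1 i) sigma_val mulr1 subrK.
Qed.

Lemma Pset_Sset x : Pset x -> Sset x.
Proof.
by move=> /Pset_iota_row_orbit[s [g ->]]; apply/Sset_shift/Sset_col_perm/Sset_iota_row.
Qed.

End SumsOfDistinctVectors.

Theorem proposition5p1 (n : nat) (hn : (1 < n)%N) :
  (forall g : 'Z_n, Sset (g *: ones n)) /\
  (forall (r : 'rV['Z_n]_(n.-1)) (s : 'S_(n.-1)), Sset r -> Sset (col_perm s r)) /\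
  (forall (r : 'rV['Z_n]_(n.-1)) (g : 'Z_n), g \is a GRing.unit -> Sset r -> Sset (g *: r)) /\
  (forall (r : 'rV['Z_n]_(n.-1)) (g : 'Z_n), Sset r -> Sset (r + g *: ones n)) /\
  (forall x : 'rV['Z_n]_(n.-1), Pset x -> Sset x).
Proof.
split; first by move=> g; rewrite -[_ *: _]add0r; apply/Sset_shift/Sset0.
split; first exact: Sset_col_perm.
split; first exact: Sset_scale.
split; first exact: Sset_shift.
exact: Pset_Sset.
Qed.
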